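(* With $w=\sqrt{(u+1)^2-4}$, $$\sum_{n\ge0}\Bigl(\sum_{\sigma\in\mathfrak S_n}u^{{\rm lrda}(\sigma)}\beta^{{\rm RLmin}(\sigma)}\Bigr)\frac{t^n}{n!}=e^{\frac{\beta(u-1)}{2}t}\left(\frac{w}{w\cosh\bigl(\frac{wt}{2}\bigr)-(1+u)\sinh\bigl(\frac{wt}{2}\bigr)}\right)^{\beta}.$$
   Context: For $\sigma=\sigma_1\cdots\sigma_n\in\mathfrak S_n$ ($\mathfrak S_0$ = empty permutation): ${\rm lrda}(\sigma)$ is the number of $i$ with $1\le i\le n$ and $\sigma_{i-1}<\sigma_i<\sigma_{i+1}$ (conventions $\sigma_0=0$, $\sigma_{n+1}=+\infty$); ${\rm RLmin}(\sigma)$ is the number of $i$ with $\sigma_j>\sigma_i$ for all $j>i$. Identity of formal power series in $t$; the bracketed base has constant term $1$ and only even powers of $w$ occur; $G^c:=\exp(c\log G)$. *)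

(* Formal power series in t over a field K of characteristic 0
   (numFieldType), represented by their coefficient sequences nat -> K. *)
From mathcomp Require Import all_boot all_order all_algebra all_fingroup.
Set Implicit Arguments. Unset Strict Implicit. Unset Printing Implicit Defensive.
Import Order.TTheory GRing.Theory Num.Theory.
Local Open Scope ring_scope.

Section PS.
Variable K : numFieldType.

Definition ps := nat -> K.

Definition psC (c : K) : ps := fun n => if n == 0%N then c else 0.
Definition psadd (f g : ps) : ps := fun n => f n + g n.
Definition psscale (c : K) (f : ps) : ps := fun n => c * f n.
Definition psmul (f g : ps) : ps :=
  fun n => \sum_(i < n.+1) f i * g (n - i)%N.
Fixpoint pspow (f : ps) (k : nat) : ps :=
  if k is k'.+1 then psmul f (pspow f k') else psC 1.

Definition pslin (c : K) : ps := fun n => if n == 1%N then c else 0.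

(* exp f = sum_k f^k / k!  (for f with zero constant term; the sum is finite
   coefficientwise) *)
Definition psexp (f : ps) : ps :=
  fun n => \sum_(k < n.+1) pspow f k n / (k`!)%:R.

(* log g = sum_{k>=1} (-1)^(k+1) (g-1)^k / k  (for g with constant term 1) *)
Definition pslog (g : ps) : ps :=
  fun n => \sum_(1 <= k < n.+1) (-1) ^+ k.+1 * pspow (psadd g (psC (-1))) k n / k%:R.

(* multiplicative inverse of f with f 0 <> 0:
   1/f = (1/f0) * sum_k (1 - f/f0)^k *)
Definition psinv (f : ps) : ps :=
  let h := psadd (psC 1) (psscale (- (f 0%N)^-1) f) in
  fun n => (f 0%N)^-1 * \sum_(k < n.+1) pspow h k n.

Definition pspowr (G : ps) (c : K) : ps := psexp (psscale c (pslog G)).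

Definition pscosh (c : K) : ps :=
  psscale (2^-1) (psadd (psexp (pslin c)) (psexp (pslin (- c)))).
Definition pssinh (c : K) : ps :=
  psscale (2^-1) (psadd (psexp (pslin c)) (psscale (-1) (psexp (pslin (- c))))).

End PS.
Local Close Scope ring_scope.

(* Permutation statistics.  For s : 'S_n, sigma_{i+1} = s i (values 0..n-1,
   i.e. shifted by one, which preserves all comparisons). *)
Definition perm_word n (s : 'S_n) : seq nat := [seq val (s i) | i <- enum 'I_n].

(* lrda: positions i (0-based) with sigma_{i-1} < sigma_i < sigma_{i+1},
   with sigma_0 = 0 (= -infinity) and sigma_{n+1} = +infinity. *)
Definition lrda n (s : 'S_n) : nat :=
  let f := fun j => nth 0%N (perm_word s) j in
  count (fun i => ((i == 0%N) || (f i.-1 < f i)) && ((i.+1 == n) || (f i < f i.+1)))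
        (iota 0 n).

Definition RLmin n (s : 'S_n) : nat :=
  let f := fun j => nth 0%N (perm_word s) j in
  count (fun i => all (fun j => f i < f j) (iota i.+1 (n - i.+1))) (iota 0 n).

(* Cutting a permutation at its minimum m, sigma = alpha m gamma, the
   right-to-left minima of sigma are m and those of gamma, while its double
   ascents are those of alpha (read with the smaller m on its right), those of
   gamma (read with the smaller m on its left), and m itself when alpha is empty
   and gamma is not (or sigma = m).  As the statistics only depend on relative
   order, the exponential generating functions B of the alpha-words (weight
   beta = 1, smaller right neighbour) and F of all permutations satisfy
     B' = B^2 + (u - 1) (B - 1),   F' = beta (B + u - 1) F,   B(0) = F(0) = 1,
   and such formal differential equations have unique solutions.  The closed
   form satisfies them: with a = w/2, c = (u-1)/2 and
   H = w cosh(at) - (1+u) sinh(at) we have H'' = a^2 H, so E = H'/H solves the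
   Riccati equation E' = a^2 - E^2; since a^2 = c^2 + 2c this is the equation
   of B = -E - c, and (w/H)^beta has logarithmic derivative -beta E. *)

From HB Require Import structures.
From mathcomp Require Import all_boot all_order all_algebra all_fingroup.
From mathcomp Require Import boolp ring zify.
Set Implicit Arguments. Unset Strict Implicit. Unset Printing Implicit Defensive.
Import Order.TTheory GRing.Theory Num.Theory.
Local Open Scope ring_scope.

Section SeriesRing.
Variable K : numFieldType.
Implicit Types (f g h : ps K) (c : K).

Lemma ps_ext f g : f =1 g -> f = g.
Proof. exact: funext. Qed.

Definition ps_trunc (N : nat) f : {poly K} := \poly_(i < N.+1) f i.

Lemma coef_ps_trunc N f j : (j <= N)%N -> (ps_trunc N f)`_j = f j.
Proof. by move=> jN; rewrite coef_poly ltnS jN. Qed.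

Lemma psmul_polyE n f g (p q : {poly K}) :
  (forall j, (j <= n)%N -> f j = p`_j) -> (forall j, (j <= n)%N -> g j = q`_j) ->
  psmul f g n = (p * q)`_n.
Proof.
move=> fp gq; rewrite coefM; apply: eq_bigr => i _.
by rewrite fp ?gq ?leq_subr // -ltnS.
Qed.

Lemma psmul_truncE N f g j : (j <= N)%N ->
  psmul f g j = (ps_trunc N f * ps_trunc N g)`_j.
Proof. by move=> jN; apply: psmul_polyE => i ij; rewrite coef_ps_trunc // (leq_trans ij). Qed.

Lemma psmulA : associative (@psmul K).
Proof.
move=> f g h; apply: ps_ext => n.
have truncE F j : (j <= n)%N -> F j = (ps_trunc n F)`_j by move=> jn; rewrite coef_ps_trunc.
rewrite (psmul_polyE (truncE f) (@psmul_truncE n g h)).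
by rewrite (psmul_polyE (@psmul_truncE n f g) (truncE h)) mulrA.
Qed.

Lemma psmulC : commutative (@psmul K).
Proof. by move=> f g; apply: ps_ext => n; rewrite !(psmul_truncE _ _ (leqnn n)) mulrC. Qed.

Lemma psmul1 : left_id (psC 1) (@psmul K).
Proof.
move=> f; apply: ps_ext => n; rewrite (@psmul_polyE _ _ _ 1 (ps_trunc n f)).
- by rewrite mul1r coef_ps_trunc.
- by move=> j _; rewrite coefC.
- by move=> j jn; rewrite coef_ps_trunc.
Qed.

Lemma psmulDl : left_distributive (@psmul K) (@psadd K).
Proof.
move=> f g h; apply: ps_ext => n.
rewrite /psadd (psmul_truncE f h (leqnn n)) (psmul_truncE g h (leqnn n)) -coefD -mulrDl.
by apply: psmul_polyE => j jn; rewrite ?coefD !coef_ps_trunc.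
Qed.

Lemma psaddA : associative (@psadd K).
Proof. by move=> f g h; apply: ps_ext => n; rewrite /psadd addrA. Qed.

Lemma psaddC : commutative (@psadd K).
Proof. by move=> f g; apply: ps_ext => n; rewrite /psadd addrC. Qed.

Lemma psadd0 : left_id (psC 0) (@psadd K).
Proof. by move=> f; apply: ps_ext => n; rewrite /psadd /psC; case: ifP; rewrite add0r. Qed.

Definition psopp f : ps K := fun n => - f n.

Lemma psaddN : left_inverse (psC 0) psopp (@psadd K).
Proof. by move=> f; apply: ps_ext => n; rewrite /psadd /psopp /psC addNr; case: ifP. Qed.

Lemma psC1_neq0 : psC 1 != psC 0 :> ps K.
Proof.
by apply/eqP => /(congr1 (fun f : ps K => f 0%N)); rewrite /psC /=; apply/eqP; exact: oner_neq0.
Qed.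

HB.instance Definition _ := gen_eqMixin (ps K).
HB.instance Definition _ := gen_choiceMixin (ps K).
HB.instance Definition _ := GRing.isZmodule.Build (ps K) psaddA psaddC psadd0 psaddN.
HB.instance Definition _ :=
  GRing.Zmodule_isComNzRing.Build (ps K) psmulA psmulC psmul1 psmulDl psC1_neq0.

Lemma psaddE f g : psadd f g = f + g. Proof. by []. Qed.
Lemma psmulE f g : psmul f g = f * g. Proof. by []. Qed.
Lemma pspowE f k : pspow f k = f ^+ k.
Proof. by elim: k => [|k IHk] //=; rewrite exprS -IHk. Qed.

Lemma pscoefD f g n : (f + g) n = f n + g n. Proof. by []. Qed.
Lemma pscoefN f n : (- f) n = - f n. Proof. by []. Qed.
Lemma pscoefB f g n : (f - g) n = f n - g n. Proof. by []. Qed.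
Lemma pscoefM f g n : (f * g) n = \sum_(i < n.+1) f i * g (n - i)%N. Proof. by []. Qed.
Lemma pscoefC c n : psC c n = if n == 0%N then c else 0. Proof. by []. Qed.
Lemma pscoef1 n : (1 : ps K) n = if n == 0%N then 1 else 0. Proof. by []. Qed.
Lemma pscoef0 n : (0 : ps K) n = 0. Proof. by rewrite [LHS]pscoefC if_same. Qed.

Lemma pscoef_sum I (r : seq I) (P : pred I) (F : I -> ps K) n :
  (\sum_(i <- r | P i) F i) n = \sum_(i <- r | P i) F i n.
Proof. by apply: (big_morph (fun f : ps K => f n)) => //; exact: pscoef0. Qed.

Lemma pscoefCM c f n : (psC c * f) n = c * f n.
Proof. by rewrite pscoefM big_ord_recl subn0 big1 ?addr0 // => i _; rewrite mul0r. Qed.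

Lemma psscaleE c f : psscale c f = psC c * f.
Proof. by apply: ps_ext => n; rewrite pscoefCM. Qed.

Lemma psC1 : psC 1 = 1 :> ps K. Proof. by []. Qed.

Lemma psCD a b : psC (a + b) = psC a + psC b :> ps K.
Proof. by apply: ps_ext => n; rewrite pscoefD !pscoefC; case: ifP; rewrite ?addr0. Qed.

Lemma psCN a : psC (- a) = - psC a :> ps K.
Proof. by apply: ps_ext => n; rewrite pscoefN !pscoefC; case: ifP; rewrite ?oppr0. Qed.

Lemma psCM a b : psC (a * b) = psC a * psC b :> ps K.
Proof. by apply: ps_ext => n; rewrite pscoefCM !pscoefC; case: ifP; rewrite ?mulr0. Qed.

Lemma psCX a k : psC (a ^+ k) = psC a ^+ k :> ps K.
Proof. by elim: k => [|k IHk] //; rewrite !exprS psCM IHk. Qed.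

Lemma psCn k : psC k%:R = k%:R :> ps K.
Proof. by elim: k => [|k IHk] //; rewrite -addn1 !natrD psCD IHk. Qed.

Lemma pscoef_natM k f n : (k%:R * f) n = k%:R * f n.
Proof. by rewrite -psCn pscoefCM. Qed.

End SeriesRing.

Section SeriesCalculus.
Variable K : numFieldType.
Implicit Types (f g h : ps K) (c : K).

Definition eq_upto n f g := forall j, (j <= n)%N -> f j = g j.

Lemma eq_uptoD n f f' g g' :
  eq_upto n f f' -> eq_upto n g g' -> eq_upto n (f + g) (f' + g').
Proof. by move=> ff' gg' j jn; rewrite !pscoefD ff' ?gg'. Qed.

Lemma eq_uptoM n f f' g g' :
  eq_upto n f f' -> eq_upto n g g' -> eq_upto n (f * g) (f' * g').
Proof.
move=> ff' gg' j jn; rewrite !pscoefM; apply: eq_bigr => i _.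
have ij : (i <= j)%N by rewrite -ltnS.
by rewrite ff' ?gg' ?(leq_trans (leq_subr _ _) jn) ?(leq_trans ij jn).
Qed.

Lemma pscoefX_eq0 f k n : f 0%N = 0 -> (n < k)%N -> (f ^+ k) n = 0.
Proof.
move=> f0; elim: k n => [//|k IHk] n nk.
rewrite exprS pscoefM big1 // => -[[|i] ?] _ /=; first by rewrite f0 mul0r.
by rewrite IHk ?mulr0 //; lia.
Qed.

Lemma pscoefXM_eq0 f g k n : f 0%N = 0 -> (n < k)%N -> (f ^+ k * g) n = 0.
Proof.
move=> f0 nk; rewrite pscoefM big1 // => i _.
by rewrite pscoefX_eq0 ?mul0r //; move: (ltn_ord i) nk; lia.
Qed.

Lemma sum_ord_widen (F : nat -> K) n M : (n <= M)%N ->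
  (forall k, (n <= k)%N -> F k = 0) -> \sum_(k < n) F k = \sum_(k < M) F k.
Proof.
move=> nM F0; rewrite (big_ord_widen _ _ nM) big_mkcond.
by apply: eq_bigr => k _; case: ltnP => // /F0.
Qed.

Definition psderiv f : ps K := fun n => n.+1%:R * f n.+1.

Lemma psderivE f n : psderiv f n = n.+1%:R * f n.+1. Proof. by []. Qed.

Lemma psderivD f g : psderiv (f + g) = psderiv f + psderiv g.
Proof. by apply: ps_ext => n; rewrite pscoefD !psderivE pscoefD mulrDr. Qed.

Lemma psderivN f : psderiv (- f) = - psderiv f.
Proof. by apply: ps_ext => n; rewrite pscoefN !psderivE pscoefN mulrN. Qed.

Lemma psderivB f g : psderiv (f - g) = psderiv f - psderiv g.
Proof. by rewrite psderivD psderivN. Qed.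

Lemma psderivC c : psderiv (psC c) = 0.
Proof. by apply: ps_ext => n; rewrite psderivE pscoefC pscoef0 mulr0. Qed.

Lemma psderivM f g : psderiv (f * g) = psderiv f * g + f * psderiv g.
Proof.
apply: ps_ext => n; rewrite pscoefD psderivE -psmulE (psmul_truncE _ _ (leqnn n.+1)).
rewrite mulr_natl -coef_deriv derivM coefD -!psmulE.
congr (_ + _); symmetry; apply: psmul_polyE => j jn;
  by rewrite ?coef_deriv ?psderivE coef_ps_trunc ?mulr_natl // (leqW jn).
Qed.

Lemma psderivCM c f : psderiv (psC c * f) = psC c * psderiv f.
Proof. by rewrite psderivM psderivC mul0r add0r. Qed.

Lemma psderivX f k : psderiv (f ^+ k.+1) = k.+1%:R * f ^+ k * psderiv f.
Proof.
elim: k => [|k IHk]; first by rewrite expr1 expr0 mulr1 mul1r.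
by rewrite exprS psderivM IHk -natr1 exprS; ring.
Qed.

Lemma psexpE f n M : f 0%N = 0 -> (n <= M)%N ->
  psexp f n = \sum_(k < M.+1) (f ^+ k) n / k`!%:R.
Proof.
move=> f0 nM; rewrite /psexp; under eq_bigr do rewrite pspowE.
rewrite (@sum_ord_widen (fun k => (f ^+ k) n / k`!%:R) n.+1 M.+1) // => k nk.
by rewrite pscoefX_eq0 ?mul0r.
Qed.

Lemma psexp_coef0 f : psexp f 0%N = 1.
Proof. by rewrite /psexp big_ord1 /= /psC /= divr1. Qed.

Lemma psderiv_exp f : f 0%N = 0 -> psderiv (psexp f) = psderiv f * psexp f.
Proof.
move=> f0; apply: ps_ext => n.
transitivity (\sum_(k < n.+1) (psderiv f * f ^+ k) n / k`!%:R).
  rewrite psderivE (psexpE f0 (leqnn n.+1)) mulr_sumr big_ord_recl /=.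
  rewrite expr0 pscoef1 /= mul0r mulr0 add0r.
  apply: eq_bigr => k _; rewrite /bump /= add1n factS natrM.
  rewrite mulrA -[n.+1%:R * _]/(psderiv (f ^+ k.+1) n) psderivX -mulrA pscoef_natM.
  have kf_neq0 : (k`!)%:R != 0 :> K by rewrite pnatr_eq0 -lt0n fact_gt0.
  by rewrite [f ^+ k * _]mulrC; field; rewrite kf_neq0 nat1r pnatr_eq0.
rewrite [RHS]pscoefM.
under [RHS]eq_bigr => i _ do rewrite (psexpE f0 (leq_subr i n)) mulr_sumr.
rewrite exchange_big /=; apply: eq_bigr => k _.
by rewrite pscoefM mulr_suml; apply: eq_bigr => i _; rewrite mulrA.
Qed.

Lemma pslogE g n M : g 0%N = 1 -> (n <= M)%N ->
  pslog g n = \sum_(k < M) (-1) ^+ k * ((g - 1) ^+ k.+1) n / k.+1%:R.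
Proof.
move=> g0 nM; rewrite /pslog big_add1 /= big_mkord psaddE psCN.
have g10 : (g - 1) 0%N = 0 by rewrite pscoefB g0 subrr.
transitivity (\sum_(k < n) (-1) ^+ k * ((g - 1) ^+ k.+1) n / k.+1%:R).
  by apply: eq_bigr => k _; rewrite pspowE !exprS !mulN1r opprK.
rewrite (@sum_ord_widen (fun k => (-1) ^+ k * ((g - 1) ^+ k.+1) n / k.+1%:R) n M) // => k nk.
by rewrite pscoefX_eq0 ?mulr0 ?mul0r.
Qed.

Lemma pslog_coef0 g : pslog g 0%N = 0.
Proof. by rewrite /pslog big_geq. Qed.

Lemma psderiv_logE g j : g 0%N = 1 ->
  psderiv (pslog g) j = \sum_(k < j.+1) (-1) ^+ k * ((g - 1) ^+ k * psderiv g) j.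
Proof.
move=> g0; rewrite psderivE (pslogE g0 (leqnn j.+1)) mulr_sumr; apply: eq_bigr => k _.
rewrite -mulrA mulrCA; congr (_ * _).
rewrite mulrA -[j.+1%:R * _]/(psderiv ((g - 1) ^+ k.+1) j).
rewrite psderivX psderivB psderivC subr0 -mulrA pscoef_natM.
by rewrite mulrC mulrA mulVf ?mul1r // pnatr_eq0.
Qed.

Lemma psderiv_log g : g 0%N = 1 -> psderiv (pslog g) * g = psderiv g.
Proof.
move=> g0; set h := g - 1; apply: ps_ext => n.
have h0 : h 0%N = 0 by rewrite /h pscoefB g0 subrr.
set S := \sum_(k < n.+1) (- h) ^+ k.
(* the geometric series S inverts g = 1 + h up to order n *)
have Sg : S * g = 1 - (- h) ^+ n.+1.
  have := subrX1 (- h) n.+1; rewrite -/S => e.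
  by rewrite -[1 - _]opprB e /h; ring.
have Dh : psderiv h = psderiv g by rewrite psderivB psderivC subr0.
have logS : eq_upto n (psderiv (pslog g)) (S * psderiv h).
  move=> j jn; rewrite psderiv_logE // /S mulr_suml pscoef_sum Dh.
  rewrite (@sum_ord_widen (fun k => (-1) ^+ k * (h ^+ k * psderiv g) j) j.+1 n.+1 jn).
    apply: eq_bigr => k _; rewrite [(- h) ^+ k]exprNn.
    have -> : (-1 : ps K) ^+ k = psC ((-1) ^+ k) by rewrite psCX psCN.
    by rewrite -mulrA pscoefCM.
  by move=> k jk; rewrite pscoefXM_eq0 ?mulr0.
rewrite (eq_uptoM logS (fun _ _ => erefl)) // -mulrA [psderiv h * _]mulrC mulrA Sg.
rewrite mulrBl mul1r pscoefB pscoefXM_eq0 ?subr0 ?Dh //.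
by rewrite pscoefN h0 oppr0.
Qed.
End SeriesCalculus.

Section SeriesInverse.
Variable K : numFieldType.
Implicit Types (f g : ps K) (c : K).

Lemma psinv_coef0 f : psinv f 0%N = (f 0%N)^-1.
Proof. by rewrite /psinv big_ord1 /= /psC /= mulr1. Qed.

Lemma psmulV f : f 0%N != 0 -> f * psinv f = 1.
Proof.
move=> f0; set a := f 0%N; apply: ps_ext => n.
set h := 1 + psC (- a^-1) * f.
have h0 : h 0%N = 0 by rewrite /h pscoefD pscoefCM pscoef1 /= mulNr mulVf // subrr.
set T := \sum_(k < n.+1) h ^+ k.
(* the geometric series in h = 1 - f / f(0) inverts f up to order n *)
have invT : eq_upto n (psinv f) (psC a^-1 * T).
  move=> j jn; rewrite /psinv -/a psaddE psscaleE pscoefCM /T pscoef_sum.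
  congr (_ * _); transitivity (\sum_(k < j.+1) (h ^+ k) j).
    by apply: eq_bigr => k _; rewrite pspowE.
  rewrite (@sum_ord_widen _ (fun k => (h ^+ k) j) j.+1 n.+1) // => k jk.
  exact: pscoefX_eq0.
have fT : f * (psC a^-1 * T) = 1 - h ^+ n.+1.
  have := subrX1 h n.+1; rewrite -/T => eT.
  have -> : f * (psC a^-1 * T) = (1 - h) * T by rewrite /h psCN; ring.
  by rewrite -opprB mulNr -eT opprB.
by rewrite (eq_uptoM (fun _ _ => erefl) invT) // fT pscoefB pscoefX_eq0 // subr0.
Qed.

Lemma psderiv_inv f : f 0%N != 0 ->
  psderiv (psinv f) = - (psderiv f * psinv f * psinv f).
Proof.
move=> f0; have fV := psmulV f0.
have D0 : psderiv f * psinv f + f * psderiv (psinv f) = 0 by rewrite -psderivM fV psderivC.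
transitivity (psderiv (psinv f) * (f * psinv f)); first by rewrite fV mulr1.
apply/eqP; rewrite -subr_eq0 -[X in _ == X](mulr0 (psinv f)) -D0; apply/eqP; ring.
Qed.

Lemma logderiv_riccati (h : ps K) (d : K) :
  h 0%N != 0 -> psderiv (psderiv h) = psC d * h ->
  psderiv (psderiv h * psinv h) = psC d - (psderiv h * psinv h) ^+ 2.
Proof.
move=> h0 hd; rewrite psderivM hd psderiv_inv //.
transitivity (psC d * (h * psinv h) - (psderiv h * psinv h) ^+ 2); first ring.
by rewrite psmulV // mulr1.
Qed.

Lemma psderiv_powr g (q : ps K) c : g 0%N = 1 -> psderiv g = q * g ->
  psderiv (pspowr g c) = psC c * q * pspowr g c.
Proof.
move=> g0 gq; have gV : g * psinv g = 1 by apply: psmulV; rewrite g0 oner_neq0.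
have Dlog : psderiv (pslog g) = q.
  by rewrite -[LHS]mulr1 -gV mulrA psderiv_log // gq -mulrA gV mulr1.
rewrite /pspowr psderiv_exp psscaleE ?pscoefCM ?pslog_coef0 ?mulr0 //.
by rewrite psderivCM Dlog.
Qed.

End SeriesInverse.

Section HyperbolicSeries.
Variable K : numFieldType.
Implicit Types (c : K).

Lemma psderiv_explin c : psderiv (psexp (pslin c)) = psC c * psexp (pslin c).
Proof.
rewrite psderiv_exp //; congr (_ * _); apply: ps_ext => -[|n];
  by rewrite psderivE /pslin /= ?mul1r ?mulr0.
Qed.

Lemma psderiv_cosh c : psderiv (pscosh c) = psC c * pssinh c.
Proof.
rewrite /pscosh /pssinh !psscaleE !psaddE psderivCM psderivD !psderiv_explin !psCN psC1.
ring.
Qed.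

Lemma psderiv_sinh c : psderiv (pssinh c) = psC c * pscosh c.
Proof.
rewrite /pscosh /pssinh !psscaleE !psaddE psderivCM psderivD psderivCM !psderiv_explin !psCN psC1.
ring.
Qed.

Lemma pscosh_coef0 c : pscosh c 0%N = 1.
Proof.
by rewrite /pscosh psscaleE psaddE pscoefCM pscoefD !psexp_coef0 -[1 + 1]/2%:R mulVf // pnatr_eq0.
Qed.

Lemma pssinh_coef0 c : pssinh c 0%N = 0.
Proof.
by rewrite /pssinh !psscaleE psaddE pscoefCM pscoefD pscoefCM !psexp_coef0 mulN1r subrr mulr0.
Qed.

End HyperbolicSeries.

Section FormalODE.
Variable K : numFieldType.
Implicit Types (X Y : ps K).

Lemma ode_unique (Phi : ps K -> ps K) X Y :
  (forall n X Y, eq_upto n X Y -> Phi X n = Phi Y n) ->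
  psderiv X = Phi X -> psderiv Y = Phi Y -> X 0%N = Y 0%N -> X = Y.
Proof.
move=> Phi_causal DX DY XY0.
suff XY : forall n, eq_upto n X Y.
  by apply: ps_ext => m; exact: XY.
elim=> [|n IHn] j; first by rewrite leqn0 => /eqP ->.
rewrite leq_eqVlt ltnS => /predU1P [-> | /IHn //].
apply: (@mulfI _ n.+1%:R); first by rewrite pnatr_eq0.
by rewrite -!psderivE DX DY; exact: Phi_causal.
Qed.

Lemma riccati_system_unique (k b : K) B1 B2 F1 F2 :
  psderiv B1 = B1 * B1 + psC k * (B1 - 1) ->
  psderiv B2 = B2 * B2 + psC k * (B2 - 1) -> B1 0%N = B2 0%N ->
  psderiv F1 = psC b * (B1 + psC k) * F1 ->
  psderiv F2 = psC b * (B2 + psC k) * F2 -> F1 0%N = F2 0%N -> F1 = F2.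
Proof.
move=> DB1 DB2 B0 DF1 DF2 F0.
have eqB : B1 = B2.
  apply: (@ode_unique (fun X => X * X + psC k * (X - 1))) => // n X Y XY.
  by apply: (eq_uptoD (eq_uptoM XY XY) (eq_uptoM _ (eq_uptoD XY _))) => // j.
subst B2; apply: (@ode_unique (fun X => psC b * (B1 + psC k) * X)) => // n X Y XY.
by apply: (eq_uptoM _ XY) => // j.
Qed.

End FormalODE.

Section ClosedForm.
Variables (K : numFieldType) (u beta w : K).
Hypothesis w2 : w ^+ 2 = (u + 1) ^+ 2 - 4.
Hypothesis w_neq0 : w != 0.

Let a := w / 2.
Let c := (u - 1) / 2.
Let H : ps K := psC w * pscosh a + psC (- (1 + u)) * pssinh a.
Let E : ps K := psderiv H * psinv H.
Let B : ps K := - E - psC c.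
Let F : ps K := psexp (pslin (beta * c)) * pspowr (psC w * psinv H) beta.

Let H_coef0 : H 0%N = w.
Proof. by rewrite /H pscoefD !pscoefCM pscosh_coef0 pssinh_coef0 mulr0 mulr1 addr0. Qed.

Let DH : psderiv H = psC a * (psC w * pssinh a + psC (- (1 + u)) * pscosh a).
Proof. by rewrite psderivD !psderivCM psderiv_cosh psderiv_sinh; ring. Qed.

Let E_coef0 : E 0%N = - (1 + u) / 2.
Proof.
rewrite /E pscoefM big_ord1 psinv_coef0 H_coef0 DH pscoefCM pscoefD !pscoefCM.
by rewrite pscosh_coef0 pssinh_coef0 mulr0 mulr1 add0r /a; field.
Qed.

Let E_riccati : psderiv E = psC (a * a) - E ^+ 2.
Proof.
apply: logderiv_riccati; first by rewrite H_coef0.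
by rewrite DH psderivCM psderivD !psderivCM psderiv_cosh psderiv_sinh psCM /H; ring.
Qed.

(* a^2 = c^2 + 2c is where w^2 = (u+1)^2 - 4 enters *)
Let a2 : a * a = c * c + 2 * c.
Proof.
have -> : a * a = w ^+ 2 / 4 by rewrite /a expr2; field.
by rewrite w2 /c; field.
Qed.

Lemma closed_form_riccati_coef0 : B 0%N = 1.
Proof. by rewrite /B pscoefB pscoefN E_coef0 pscoefC /= /c; field. Qed.

Let uc : psC (u - 1) = 2%:R * psC c :> ps K.
Proof. by rewrite -psCn -psCM /c; congr psC; field. Qed.

Let EB : E = - B - psC c. Proof. by rewrite /B; ring. Qed.

Lemma closed_form_riccati : psderiv B = B * B + psC (u - 1) * (B - 1).
Proof.
have DB : psderiv B = E ^+ 2 - psC (a * a).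
  by rewrite /B psderivB psderivN psderivC subr0 E_riccati; ring.
rewrite DB a2 uc [psC (_ + _)]psCD [psC (c * c)]psCM [psC (2 * c)]psCM psCn EB.
ring.
Qed.

Lemma closed_form_linear_coef0 : F 0%N = 1.
Proof. by rewrite /F /pspowr pscoefM big_ord1 sub0n !psexp_coef0 mulr1. Qed.

Lemma closed_form_linear : psderiv F = psC beta * (B + psC (u - 1)) * F.
Proof.
have G0 : (psC w * psinv H) 0%N = 1 by rewrite pscoefCM psinv_coef0 H_coef0 mulfV.
have DG : psderiv (psC w * psinv H) = - E * (psC w * psinv H).
  by rewrite psderivCM psderiv_inv ?H_coef0 // /E; ring.
rewrite /F psderivM psderiv_explin (psderiv_powr _ G0 DG) [psC (beta * _)]psCM uc EB.
ring.
Qed.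

Lemma closed_form_unique (Bc Fc : ps K) :
  psderiv Bc = Bc * Bc + psC (u - 1) * (Bc - 1) -> Bc 0%N = 1 ->
  psderiv Fc = psC beta * (Bc + psC (u - 1)) * Fc -> Fc 0%N = 1 ->
  Fc = psmul (psexp (pslin (beta * (u - 1) / 2)))
         (pspowr (psscale w (psinv (psadd (psscale w (pscosh (w / 2)))
                                          (psscale (- (1 + u)) (pssinh (w / 2))))))
            beta).
Proof.
move=> DBc Bc0 DFc Fc0.
rewrite psaddE !psscaleE -mulrA -/a -/c -/H -/F.
apply: (riccati_system_unique DBc closed_form_riccati _ DFc closed_form_linear);
  by rewrite ?closed_form_riccati_coef0 ?closed_form_linear_coef0.
Qed.

End ClosedForm.

Section SplitAtMinimum.
Variables (m : nat) (R : seq nat).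
Hypothesis mR_uniq : uniq (m :: R).

Let R_uniq : uniq R. Proof. by case/andP: mR_uniq. Qed.
Let m_notin_R : m \notin R. Proof. by case/andP: mR_uniq. Qed.

Definition subseq_at (A : {set 'I_(size R)}) : seq nat :=
  [seq nth 0%N R i | i : 'I_(size R) <- enum A].

Definition before_min (t : seq nat) : {set 'I_(size R)} :=
  [set i : 'I_(size R) | nth 0%N R i \in take (index m t) t].

Let nthR_inj : injective (fun i : 'I_(size R) => nth 0%N R i).
Proof. by move=> i j /eqP; rewrite nth_uniq // => /eqP /val_inj. Qed.

Let mem_subseq_at_nth A (i : 'I_(size R)) : (nth 0%N R i \in subseq_at A) = (i \in A).
Proof. by rewrite (mem_map nthR_inj) mem_enum. Qed.

Let nthR_surj x : x \in R -> {i : 'I_(size R) | nth 0%N R i = x}.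
Proof. by move=> xR; exists (Ordinal (etrans (index_mem x R) xR)); rewrite /= nth_index. Qed.

Lemma subseq_at_sub A x : x \in subseq_at A -> x \in R.
Proof. by case/mapP => i _ ->; exact: mem_nth. Qed.

Lemma uniq_subseq_at A : uniq (subseq_at A).
Proof. by rewrite (map_inj_uniq nthR_inj) enum_uniq. Qed.

Lemma size_subseq_at A : size (subseq_at A) = #|A|.
Proof. by rewrite size_map -cardE. Qed.

Let notin_perm_subseq_at A a : perm_eq a (subseq_at A) -> m \notin a.
Proof. by move=> pa; apply: contra m_notin_R; rewrite (perm_mem pa) => /subseq_at_sub. Qed.

Lemma perm_split_at_min t : perm_eq t (m :: R) ->
  [/\ t = take (index m t) t ++ m :: drop (index m t).+1 t,
      perm_eq (take (index m t) t) (subseq_at (before_min t))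
    & perm_eq (drop (index m t).+1 t) (subseq_at (~: before_min t))].
Proof.
move=> pt; set k := index m t.
have mt : m \in t by rewrite (perm_mem pt) mem_head.
have et : t = take k t ++ m :: drop k.+1 t.
  by rewrite -{1}(nth_index 0%N mt) -drop_nth ?index_mem // cat_take_drop.
have t_uniq : uniq t by rewrite (perm_uniq pt).
move: (t_uniq); rewrite {1}et cat_uniq /= => /and3P [ua /norP [ma gna] /andP [mg ug]].
have memR x : x \in t -> x != m -> x \in R.
  by rewrite (perm_mem pt) inE => /orP [/eqP -> /eqP|].
split=> //; apply: uniq_perm; rewrite ?uniq_subseq_at // => x.
- apply/idP/idP => [xa | /mapP [i]]; last by rewrite mem_enum inE => ? ->.
  have xm : x != m by apply: contraNneq ma => <-.
  have [i ei] := nthR_surj (memR x (mem_take xa) xm).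
  by rewrite -ei mem_subseq_at_nth inE ei.
- apply/idP/idP => [xg | /mapP [i]].
    have xm : x != m by apply: contraNneq mg => <-.
    have [i ei] := nthR_surj (memR x (mem_drop xg) xm).
    rewrite -ei mem_subseq_at_nth !inE ei; apply: contra gna => xa.
    by apply/hasP; exists x; rewrite // inE xg orbT.
  rewrite mem_enum !inE => iNa ->.
  have : nth 0%N R i \in t by rewrite (perm_mem pt) inE mem_nth ?orbT.
  rewrite {1}et mem_cat inE (negbTE iNa) /=; case/orP => // /eqP eim.
  by move: m_notin_R; rewrite -eim mem_nth.
Qed.

Lemma before_min_cat A a g :
  perm_eq a (subseq_at A) -> before_min (a ++ m :: g) = A.
Proof.
move=> pa; apply/setP => i; rewrite inE index_cat (negbTE (notin_perm_subseq_at pa)).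
by rewrite /= eqxx addn0 take_size_cat // (perm_mem pa) mem_subseq_at_nth.
Qed.

Lemma perm_cat_min A a g : perm_eq a (subseq_at A) -> perm_eq g (subseq_at (~: A)) ->
  perm_eq (a ++ m :: g) (m :: R).
Proof.
move=> pa pg; apply: uniq_perm => //.
  rewrite cat_uniq (perm_uniq pa) /= (perm_uniq pg) !uniq_subseq_at.
  rewrite (negbTE (notin_perm_subseq_at pa)) (notin_perm_subseq_at pg) /= andbT.
  apply/hasPn => x; rewrite (perm_mem pa) (perm_mem pg) => /mapP [i].
  by rewrite mem_enum inE => iNA ->; rewrite mem_subseq_at_nth.
move=> x; rewrite mem_cat !inE (perm_mem pa) (perm_mem pg).
have [-> | xm] := eqVneq x m; first by rewrite orbT.
apply/idP/idP => [/orP [] /subseq_at_sub // | /nthR_surj [i <-]].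
by rewrite !mem_subseq_at_nth inE orbN.
Qed.

Lemma big_permutations_split_min (K : nmodType) (F : seq nat -> K) :
  \sum_(t <- permutations (m :: R)) F t =
  \sum_(A : {set 'I_(size R)}) \sum_(a <- permutations (subseq_at A))
     \sum_(g <- permutations (subseq_at (~: A))) F (a ++ m :: g).
Proof.
transitivity (\sum_(t <- permutations (m :: R))
                \sum_(A : {set 'I_(size R)}) if A == before_min t then F t else 0).
  by apply: eq_bigr => t _; rewrite -big_mkcond big_pred1_eq.
rewrite exchange_big /=; apply: eq_bigr => A _; rewrite -big_mkcond -big_filter.
have -> : \sum_(a <- permutations (subseq_at A)) \sum_(g <- permutations (subseq_at (~: A)))
            F (a ++ m :: g) =
          \sum_(t <- [seq a ++ m :: g | a <- permutations (subseq_at A),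
                                       g <- permutations (subseq_at (~: A))]) F t.
  elim: (permutations _) => [|a s IHs]; first by rewrite !big_nil.
  by rewrite allpairs_cons big_cat big_map big_cons IHs.
apply: perm_big; apply: uniq_perm.
- by rewrite filter_uniq // permutations_uniq.
- apply: allpairs_uniq; rewrite ?permutations_uniq //.
  move=> _ _ /allpairsP [[a1 g1] [/= pa1 pg1 ->]] /allpairsP [[a2 g2] [/= pa2 pg2 ->]] e.
  move: pa1 pa2 e; rewrite !mem_permutations /= => pa1 pa2 e.
  have ea : size a1 = size a2 by rewrite (perm_size pa1) (perm_size pa2).
  by move/eqP: e; rewrite eqseq_cat // => /andP [/eqP -> /eqP [->]].
- move=> t; rewrite mem_filter mem_permutations; apply/andP/allpairsP.
  + case=> /eqP -> /perm_split_at_min [et pa pg].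
    by exists (take (index m t) t, drop (index m t).+1 t); rewrite !mem_permutations.
  + case=> -[a g] [/=]; rewrite !mem_permutations => pa pg ->.
    by rewrite (before_min_cat _ pa) eqxx (perm_cat_min pa pg).
Qed.

End SplitAtMinimum.

Definition succ_gt (x : nat) (s : seq nat) (rb : bool) : bool :=
  if s is y :: _ then (x < y)%N else rb.

(* [lb] says whether the left neighbour of s is smaller than its first entry,
   [rb] whether the right neighbour of s is larger than its last entry. *)
Fixpoint dasc (lb rb : bool) (s : seq nat) : nat :=
  if s is x :: s' then ((lb && succ_gt x s' rb) + dasc (succ_gt x s' rb) rb s')%N
  else 0%N.

Fixpoint rlmin (s : seq nat) : nat :=
  if s is x :: s' then (all (fun y => x < y)%N s' + rlmin s')%N else 0%N.

Lemma dasc_cat_gt lb rb a m g : all (fun x => m < x)%N a ->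
  dasc lb rb (a ++ m :: g) =
  (dasc lb false a + dasc (if a is [::] then lb else false) rb (m :: g))%N.
Proof.
elim: a lb => [|x a IHa] lb //= /andP [mx ma].
have -> : succ_gt x (a ++ m :: g) rb = succ_gt x a false.
  by case: a {IHa ma} => [|y a] //=; apply/negbTE; rewrite -leqNgt ltnW.
rewrite IHa //; case: a {IHa ma} => [|y a] /=; first by rewrite andbF !addn0.
by rewrite addnA.
Qed.

Lemma dasc_cat_min rb a m g : all (fun x => m < x)%N a -> all (fun x => m < x)%N g ->
  dasc true rb (a ++ m :: g) =
  (dasc true false a + ((a == [::]) && ((g != [::]) || rb)) + dasc true rb g)%N.
Proof.
move=> ma mg; rewrite dasc_cat_gt //.
case: g mg => [|y g] /= mg; first by case: a {ma} => [|x a] /=; rewrite ?addn0 ?orbF.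
by case/andP: mg => -> _; case: a {ma} => [|x a] /=; rewrite !addnA.
Qed.

Lemma rlmin_cat_min a m g : all (fun x => m < x)%N a -> all (fun x => m < x)%N g ->
  rlmin (a ++ m :: g) = (rlmin g).+1.
Proof.
move=> ma mg; elim: a ma => [|x a IHa] /=; first by rewrite mg.
case/andP => mx ma; rewrite IHa //.
by rewrite all_cat /= ltnNge ltnW // andbF.
Qed.

Lemma sum_set_card (V : nmodType) n (h : nat -> V) :
  \sum_(A : {set 'I_n}) h #|A| = \sum_(j < n.+1) h j *+ 'C(n, j).
Proof.
rewrite (partition_big (fun A : {set 'I_n} => inord #|A| : 'I_n.+1) xpredT) //=.
apply: eq_bigr => j _.
have An (A : {set 'I_n}) : (#|A| < n.+1)%N by rewrite ltnS -[X in (_ <= X)%N]card_ord max_card.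
transitivity (\sum_(A : {set 'I_n} | #|A| == j) h j).
  apply: eq_big => [A | A /eqP <-]; last by rewrite inordK.
  by apply/eqP/eqP => [<- | Aj]; [rewrite inordK | apply: val_inj; rewrite /= inordK].
by rewrite sumr_const -[X in 'C(X, _)]card_ord -card_draws cardsE.
Qed.

Section Weights.
Variables (K : numFieldType) (u : K).

Definition weight (rb : bool) (b : K) (t : seq nat) : K := u ^+ dasc true rb t * b ^+ rlmin t.

Definition wperms (rb : bool) (b : K) (s : seq nat) : K :=
  \sum_(t <- permutations s) weight rb b t.

Definition wnum (rb : bool) (b : K) (n : nat) : K := wperms rb b (iota 0 n).

(* the contribution of the minimum itself to the double ascents *)
Definition min_factor (rb : bool) (i j : nat) : K :=
  if (i == 0%N) && ((0 < j)%N || rb) then u else 1.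

Lemma weight_cat_min rb b a m g : all (fun x => m < x)%N a -> all (fun x => m < x)%N g ->
  weight rb b (a ++ m :: g) =
  b * min_factor rb (size a) (size g) * weight false 1 a * weight rb b g.
Proof.
move=> ma mg; rewrite /weight dasc_cat_min // rlmin_cat_min // /min_factor.
rewrite size_eq0 lt0n size_eq0 !exprD expr1n mulr1 exprS.
by case: (_ && _); rewrite ?expr1 ?expr0; ring.
Qed.

Lemma wperms_perm rb b s s' : perm_eq s s' -> wperms rb b s = wperms rb b s'.
Proof. by move=> ss'; apply: perm_big; exact: perm_permutations. Qed.

Lemma wperms_split_min rb b m R : uniq (m :: R) -> all (fun x => m < x)%N R ->
  wperms rb b (m :: R) = b * \sum_(A : {set 'I_(size R)})
     min_factor rb #|A| #|~: A| * wperms false 1 (subseq_at A) * wperms rb b (subseq_at (~: A)).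
Proof.
move=> mR_uniq mR; rewrite /wperms big_permutations_split_min // mulr_sumr.
apply: eq_bigr => A _.
have gt_m (B : {set 'I_(size R)}) a : a \in permutations (subseq_at B) -> all (fun x => m < x)%N a.
  rewrite mem_permutations => pa; apply/allP => x; rewrite (perm_mem pa).
  by move=> /subseq_at_sub; apply: (allP mR).
rewrite !mulrA [b * _ * _]mulr_sumr mulr_suml; apply: eq_big_seq => a pa.
rewrite mulr_sumr; apply: eq_big_seq => g pg.
rewrite weight_cat_min ?(gt_m _ _ pa) ?(gt_m _ _ pg) //.
move: pa pg; rewrite !mem_permutations => /perm_size -> /perm_size ->.
by rewrite !size_subseq_at.
Qed.

Definition wrec (rb : bool) (b : K) (n : nat) : K :=
  b * \sum_(j < n.+1) (min_factor rb j (n - j) * wnum false 1 j * wnum rb b (n - j)) *+ 'C(n, j).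

Let wperms_split_min_rec rb b m R : uniq (m :: R) -> all (fun x => m < x)%N R ->
  (forall s, uniq s -> (size s <= size R)%N -> forall rb b, wperms rb b s = wnum rb b (size s)) ->
  wperms rb b (m :: R) = wrec rb b (size R).
Proof.
move=> mR_uniq mR IH; rewrite wperms_split_min // /wrec; congr (_ * _).
have cardR (A : {set 'I_(size R)}) : (#|A| <= size R)%N.
  by rewrite -[X in (_ <= X)%N]card_ord max_card.
set h := fun j => min_factor rb j (size R - j) * wnum false 1 j * wnum rb b (size R - j).
rewrite -(@sum_set_card _ _ h).
apply: eq_bigr => A _; rewrite !IH ?(uniq_subseq_at mR_uniq) ?size_subseq_at ?cardR //.
by rewrite [#|~: A|]cardsCs setCK card_ord.
Qed.

Let wnumS_of_relabel rb b n :
  (forall s, uniq s -> (size s <= n)%N -> forall rb b, wperms rb b s = wnum rb b (size s)) ->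
  wnum rb b n.+1 = wrec rb b n.
Proof.
move=> IH; have iota_gt0 : all (fun y => 0 < y)%N (iota 1 n).
  by apply/allP => y; rewrite mem_iota => /andP [].
rewrite /wnum -[n in RHS](size_iota 1 n) wperms_split_min_rec ?size_iota //.
by rewrite -[_ :: _]/(iota 0 n.+1) iota_uniq.
Qed.

Lemma wperms_relabel rb b s : uniq s -> wperms rb b s = wnum rb b (size s).
Proof.
move: {2}(size s) (leqnn (size s)) => N; elim: N s rb b => [|N IHN] s rb b.
  by rewrite leqn0 size_eq0 => /eqP ->.
move=> sN s_uniq; have ps : perm_eq (sort leq s) s by rewrite perm_sort.
have ss : sorted ltn (sort leq s).
  by rewrite ltn_sorted_uniq_leq sort_uniq s_uniq sort_sorted //; exact: leq_total.
rewrite -(wperms_perm rb b ps) -(perm_size ps).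
case: (sort leq s) ps ss => [|m R] ps ss; first by rewrite /wnum /wperms.
have IHR s' : uniq s' -> (size s' <= size R)%N -> forall rb b, wperms rb b s' = wnum rb b (size s').
  have szR : (size R).+1 = size s := perm_size ps.
  by move=> s'_uniq s'R rb' b'; apply: IHN; rewrite // (leq_trans s'R) // -ltnS szR.
have mR_uniq : uniq (m :: R) by rewrite (perm_uniq ps).
by rewrite (wperms_split_min_rec _ _ mR_uniq (order_path_min ltn_trans ss) IHR) wnumS_of_relabel.
Qed.

Lemma wnum0 rb b : wnum rb b 0 = 1.
Proof. by rewrite /wnum /wperms /= big_cons big_nil /weight /= !expr0 mulr1 addr0. Qed.

Lemma wnumS rb b n : wnum rb b n.+1 = wrec rb b n.
Proof. by apply: wnumS_of_relabel => s s_uniq _ rb' b'; exact: wperms_relabel. Qed.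

End Weights.

Section ExponentialGF.
Variable K : numFieldType.
Implicit Types (a b : nat -> K).

Definition egf a : ps K := fun n => a n / n`!%:R.

Let fact_neq0 n : n`!%:R != 0 :> K.
Proof. by rewrite pnatr_eq0 -lt0n fact_gt0. Qed.

Lemma egf_coef0 a : egf a 0%N = a 0%N.
Proof. by rewrite /egf divr1. Qed.

Lemma psderiv_egf a : psderiv (egf a) = egf (fun n => a n.+1).
Proof.
apply: ps_ext => n; rewrite psderivE /egf factS natrM.
by field; rewrite fact_neq0 nat1r pnatr_eq0.
Qed.

Lemma egfM a b :
  egf a * egf b = egf (fun n => \sum_(j < n.+1) (a j * b (n - j)%N) *+ 'C(n, j)).
Proof.
apply: ps_ext => n; rewrite pscoefM /egf mulr_suml; apply: eq_bigr => j _.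
have jn : (j <= n)%N by rewrite -ltnS.
have binE : 'C(n, j)%:R * (j`!%:R * (n - j)`!%:R) = n`!%:R :> K.
  by rewrite -!natrM -(bin_fact jn).
have bin_neq0 : 'C(n, j)%:R != 0 :> K by rewrite pnatr_eq0 -lt0n bin_gt0.
by rewrite -binE -mulr_natl; field; rewrite bin_neq0 !fact_neq0.
Qed.

End ExponentialGF.

Section PermutationGF.
Variables (K : numFieldType) (u beta : K).

Lemma sum_min_factor rb n (X : nat -> K) :
  \sum_(j < n.+1) (min_factor u rb j (n - j) * X j) *+ 'C(n, j) =
  \sum_(j < n.+1) X j *+ 'C(n, j) + (if (0 < n)%N || rb then (u - 1) * X 0%N else 0).
Proof.
rewrite !big_ord_recl /= subn0 bin0 !mulr1n /min_factor eqxx /=.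
under eq_bigr do rewrite /bump /= add1n mul1r.
by case: (_ || _); ring.
Qed.

Let Bgf : ps K := egf (wnum u false 1).
Let Fgf : ps K := egf (wnum u true beta).

Lemma wnum_egf_riccati : psderiv Bgf = Bgf * Bgf + psC (u - 1) * (Bgf - 1).
Proof.
rewrite /Bgf psderiv_egf egfM; apply: ps_ext => n.
rewrite /egf pscoefD pscoefCM pscoefB pscoef1 wnumS /wrec mul1r.
under eq_bigr do rewrite -mulrA.
rewrite (sum_min_factor false n (fun j => wnum u false 1 j * wnum u false 1 (n - j))).
rewrite /= orbF mulrDl; congr (_ + _).
case: n => [|n] /=; first by rewrite fact0 wnum0 !divr1 subrr mulr0.
by rewrite subr0 subn0 wnum0 mul1r mulrA.
Qed.

Lemma wnum_egf_linear : psderiv Fgf = psC beta * (Bgf + psC (u - 1)) * Fgf.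
Proof.
rewrite /Fgf psderiv_egf -mulrA mulrDl egfM; apply: ps_ext => n.
rewrite /egf pscoefCM pscoefD pscoefCM wnumS /wrec.
under eq_bigr do rewrite -mulrA.
rewrite (sum_min_factor true n (fun j => wnum u false 1 j * wnum u true beta (n - j))).
by rewrite orbT subn0 wnum0 mul1r; ring.
Qed.

End PermutationGF.

Lemma iota1_map_succ k : iota 1 k = map succn (iota 0 k).
Proof. exact: (iotaDl 1 0 k). Qed.

Lemma dasc_countE lb rb (t : seq nat) :
  count (fun i => (if i == 0%N then lb else (nth 0%N t i.-1 < nth 0%N t i)%N) &&
                  (if i.+1 == size t then rb else (nth 0%N t i < nth 0%N t i.+1)%N))
        (iota 0 (size t)) = dasc lb rb t.
Proof.
elim: t lb => [|x t IHt] lb //=.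
rewrite iota1_map_succ count_map -IHt; congr (_ + _)%N; first by case: t {IHt}.
apply: eq_in_count => -[|i] /=; rewrite mem_iota //.
by case: t {IHt}.
Qed.

Lemma rlmin_countE (t : seq nat) :
  count (fun i => all (fun j => nth 0%N t i < nth 0%N t j)%N (iota i.+1 (size t - i.+1)))
        (iota 0 (size t)) = rlmin t.
Proof.
elim: t => [|x t IHt] //=.
rewrite subSS subn0 !iota1_map_succ count_map -IHt /=; congr (_ + _)%N.
  by rewrite all_map -{3}(mkseq_nth 0%N t) /mkseq all_map.
apply: eq_count => i /=.
by rewrite subSS -[i.+2]/(1 + i.+1)%N iotaDl all_map.
Qed.

Lemma size_perm_word n (s : 'S_n) : size (perm_word s) = n.
Proof. by rewrite size_map size_enum_ord. Qed.

Lemma lrda_dasc n (s : 'S_n) : lrda s = dasc true true (perm_word s).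
Proof.
rewrite -dasc_countE size_perm_word; apply: eq_count => i /=.
by case: (i == 0%N); case: (i.+1 == n).
Qed.

Lemma RLmin_rlmin n (s : 'S_n) : RLmin s = rlmin (perm_word s).
Proof. by rewrite -rlmin_countE size_perm_word. Qed.

Lemma nth_perm_word n (s : 'S_n) (i : 'I_n) : nth 0%N (perm_word s) i = s i.
Proof. by rewrite (nth_map i) ?size_enum_ord // nth_ord_enum. Qed.

Lemma perm_word_inj n : injective (@perm_word n).
Proof.
move=> s1 s2 e; apply/permP => i; apply: val_inj.
by have := nth_perm_word s1 i; rewrite e nth_perm_word => h; rewrite /= h.
Qed.

Lemma perm_word_perm_iota n (s : 'S_n) : perm_eq (perm_word s) (iota 0 n).
Proof.
rewrite /perm_word -val_enum_ord (map_comp val s) perm_map //.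
apply: uniq_perm; rewrite ?(map_inj_uniq (@perm_inj _ s)) ?enum_uniq // => i.
by rewrite mem_enum; apply/mapP; exists (s^-1 i)%g; rewrite ?mem_enum ?permKV.
Qed.

Lemma perm_word_surj n t : perm_eq t (iota 0 n) -> exists s : 'S_n, perm_word s = t.
Proof.
move=> pt; have t_uniq : uniq t by rewrite (perm_uniq pt) iota_uniq.
have sz : size t = n by rewrite (perm_size pt) size_iota.
have tn i : (i < n)%N -> (nth 0%N t i < n)%N.
  move=> lt_in; have : nth 0%N t i \in iota 0 n by rewrite -(perm_mem pt) mem_nth ?sz.
  by rewrite mem_iota.
pose f (i : 'I_n) : 'I_n := insubd i (nth 0%N t i).
have fE i : val (f i) = nth 0%N t i by rewrite val_insubd tn.
have f_inj : injective f.
  move=> i j /(congr1 val); rewrite !fE => /eqP; rewrite nth_uniq ?sz // => /eqP.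
  exact: val_inj.
exists (perm f_inj); apply: (@eq_from_nth _ 0%N) => [|i]; rewrite size_perm_word ?sz // => lt_in.
by rewrite (nth_perm_word _ (Ordinal lt_in)) permE fE.
Qed.

Lemma sum_perm_word (V : nmodType) n (F : seq nat -> V) :
  \sum_(s : 'S_n) F (perm_word s) = \sum_(t <- permutations (iota 0 n)) F t.
Proof.
rewrite -(big_map (@perm_word n) xpredT F); apply: perm_big; apply: uniq_perm.
- by rewrite (map_inj_uniq (@perm_word_inj n)) // index_enum_uniq.
- exact: permutations_uniq.
move=> t; rewrite mem_permutations; apply/mapP/idP => [[s _ ->] | /perm_word_surj [s <-]].
  exact: perm_word_perm_iota.
by exists s; rewrite ?mem_index_enum.
Qed.

Theorem theorem4p3 (K : numFieldType) (u beta w : K) :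
  w ^+ 2 = (u + 1) ^+ 2 - 4 -> w != 0 ->
  forall n : nat,
    (\sum_(s : 'S_n) u ^+ lrda s * beta ^+ RLmin s) / (n`!)%:R =
    psmul
      (psexp (pslin (beta * (u - 1) / 2)))
      (pspowr
         (psscale w
            (psinv (psadd (psscale w (pscosh (w / 2)))
                          (psscale (- (1 + u)) (pssinh (w / 2))))))
         beta) n.
Proof.
move=> w2 w_neq0 n.
have wnum_coef0 rb b : egf (wnum u rb b) 0%N = 1 by rewrite egf_coef0 wnum0.
rewrite -(closed_form_unique w2 w_neq0 (wnum_egf_riccati u) (wnum_coef0 _ _)
                             (wnum_egf_linear u beta) (wnum_coef0 _ _)).
rewrite /egf /wnum /wperms -sum_perm_word.
by under eq_bigr do rewrite lrda_dasc RLmin_rlmin.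
Qed.
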